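(* Let $\ln_G:(0,\infty)\to\mathbb{R}$ be a continuous, strictly increasing, strictly concave function with $\ln_G(1)=0$, let $0<\alpha<1$, and for probability distributions $p=(p_1,\dots,p_W)$ define $Z_{G,\alpha}(p):=\frac{\ln_G(\sum_{i=1}^W p_i^{\alpha})}{1-\alpha}$. Then $Z_{G,\alpha}$ satisfies: (SK1) it is continuous in all arguments $p_1,\dots,p_W$; (SK2) it attains its maximum value over the probability simplex at the uniform distribution $p_i=1/W$ (indeed it is strictly concave); (SK3) $Z_{G,\alpha}(p_1,\dots,p_W,0)=Z_{G,\alpha}(p_1,\dots,p_W)$. *)

From HB Require Import structures.
From mathcomp Require Import all_boot all_order all_algebra.
From mathcomp Require Import all_classical all_reals all_analysis.
Set Implicit Arguments. Unset Strict Implicit. Unset Printing Implicit Defensive.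
Import Order.TTheory GRing.Theory Num.Theory.
Import numFieldNormedType.Exports.
Local Open Scope classical_set_scope.
Local Open Scope ring_scope.

Definition prob_simplex (R : realType) (n : nat) : set 'rV[R]_n :=
  [set p | (forall i, 0 <= p ord0 i) /\ \sum_(i < n) p ord0 i = 1].

(* Z_{G,alpha}(p) = ln_G(sum_i p_i^alpha) / (1 - alpha);  0 `^ alpha = 0 for alpha <> 0. *)
Definition ZG (R : realType) (lnG : R -> R) (alpha : R) (n : nat) (p : 'rV[R]_n) : R :=
  lnG (\sum_(i < n) (p ord0 i) `^ alpha) / (1 - alpha).

Definition strictly_increasing_pos (R : realType) (f : R -> R) : Prop :=
  forall x y : R, 0 < x -> x < y -> f x < f y.

Definition strictly_concave_pos (R : realType) (f : R -> R) : Prop :=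
  forall (x y t : R), 0 < x -> 0 < y -> x != y -> 0 < t -> t < 1 ->
    t * f x + (1 - t) * f y < f (t * x + (1 - t) * y).

Definition strictly_concave_on (R : realType) (n : nat) (D : set 'rV[R]_n)
  (F : 'rV[R]_n -> R) : Prop :=
  forall (p q : 'rV[R]_n) (t : R), D p -> D q -> p != q -> 0 < t -> t < 1 ->
    t * F p + (1 - t) * F q < F (t *: p + (1 - t) *: q).

From HB Require Import structures.
From mathcomp Require Import all_boot all_order all_algebra.
From mathcomp Require Import all_classical all_reals all_analysis.
From mathcomp Require Import ring lra.
Set Implicit Arguments. Unset Strict Implicit.
Import Order.TTheory GRing.Theory Num.Theory.
Import numFieldNormedType.Exports.
Local Open Scope classical_set_scope.
Local Open Scope ring_scope.

(* For 0 < alpha < 1 the map x |-> x `^ alpha lies strictly below each of its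
   tangent lines on [0, oo) away from the contact point (a consequence of the
   strict convexity of expR).  Evaluating the tangent-line bound at the
   midpoint gives the strict concavity of p |-> sum_i p_i `^ alpha; summing it
   at the contact point 1/W gives its maximality at the uniform distribution.
   Since this sum is >= 1 on the simplex, composing with the increasing,
   concave lnG and dividing by 1 - alpha > 0 keeps both properties. *)

Lemma expR_lt_convex (R : realType) (a u v : R) : 0 < a -> a < 1 -> u != v ->
  expR (a * u + (1 - a) * v) < a * expR u + (1 - a) * expR v.
Proof.
move=> a0 a1 uv; set m := a * u + (1 - a) * v.
have tangent w : w != m -> expR m * (1 + (w - m)) < expR w.
  move=> wm; have -> : expR w = expR (w - m) * expR m by rewrite -expRD subrK.
  rewrite mulrC ltr_pM2r ?expR_gt0 //.
  by apply: expR_gt1Dx; rewrite subr_eq0.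
have um : u != m by apply: contra uv => /eqP um; apply/eqP; rewrite /m in um; nra.
have vm : v != m by apply: contra uv => /eqP vm; apply/eqP; rewrite /m in vm; nra.
have key : a * (expR m * (1 + (u - m))) + (1 - a) * (expR m * (1 + (v - m))) = expR m.
  by rewrite /m; ring.
rewrite -[ltLHS]key; apply: ltrD; rewrite ltr_pM2l ?subr_gt0 //; exact: tangent.
Qed.

Section PowRConcave.
Variables (R : realType) (al : R).
Hypotheses (al_gt0 : 0 < al) (al_lt1 : al < 1).

Lemma powR_lt_tangent (x : R) : 0 <= x -> x != 1 -> x `^ al < al * x + (1 - al).
Proof.
rewrite le_eqVlt => /predU1P[<- _|x0 x1].
  by rewrite powR0 ?gt_eqF // mulr0 add0r subr_gt0.
rewrite /powR gt_eqF //.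
have := @expR_lt_convex R al (ln x) 0 al_gt0 al_lt1.
by rewrite mulr0 addr0 expR0 mulr1 lnK ?posrE // [al * _]mulrC; apply; rewrite ln_eq0.
Qed.

Lemma powR_le_tangent (x : R) : 0 <= x -> x `^ al <= al * x + (1 - al).
Proof.
move=> x0; have [->|x1] := eqVneq x 1; first by rewrite powR1 mulr1 subrKC.
exact/ltW/powR_lt_tangent.
Qed.

Lemma powR_scale (m x : R) : 0 < m -> 0 <= x -> x `^ al = m `^ al * (x / m) `^ al.
Proof.
by move=> m0 x0; rewrite -powRM ?divr_ge0 ?(ltW m0) // mulrC divfK ?gt_eqF.
Qed.

Lemma powR_le_tangent_at (m x : R) : 0 < m -> 0 <= x ->
  x `^ al <= m `^ al * (al * (x / m) + (1 - al)).
Proof.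
move=> m0 x0; rewrite (powR_scale m0 x0) ler_pM2l ?powR_gt0 //.
exact/powR_le_tangent/divr_ge0/ltW.
Qed.

Lemma powR_lt_tangent_at (m x : R) : 0 < m -> 0 <= x -> x != m ->
  x `^ al < m `^ al * (al * (x / m) + (1 - al)).
Proof.
move=> m0 x0 xm; rewrite (powR_scale m0 x0) ltr_pM2l ?powR_gt0 //.
apply: powR_lt_tangent; first exact/divr_ge0/ltW.
by apply: contra xm => /eqP xm1; rewrite -(divfK (lt0r_neq0 m0) x) xm1 mul1r.
Qed.

Lemma powR_lt_concave (a b t : R) : 0 <= a -> 0 <= b -> a != b -> 0 < t -> t < 1 ->
  t * a `^ al + (1 - t) * b `^ al < (t * a + (1 - t) * b) `^ al.
Proof.
move=> a0 b0 ab t0; rewrite -subr_gt0 => t1; set m := t * a + (1 - t) * b.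
have m0 : 0 < m.
  have tm0 : 0 <= t * a := mulr_ge0 (ltW t0) a0.
  have tm1 : 0 <= (1 - t) * b := mulr_ge0 (ltW t1) b0.
  rewrite lt_neqAle addr_ge0 // andbT eq_sym paddr_eq0 // !mulf_eq0 (gt_eqF t0) (gt_eqF t1) /=.
  by apply: contra ab => /andP[/eqP-> /eqP->].
have am : a != m by apply: contra ab => /eqP am; apply/eqP; rewrite /m in am; nra.
have ha : t * a `^ al < t * (m `^ al * (al * (a / m) + (1 - al))).
  by rewrite ltr_pM2l // powR_lt_tangent_at.
have hb := ler_wpM2l (ltW t1) (powR_le_tangent_at m0 b0).
have support : t * (m `^ al * (al * (a / m) + (1 - al))) +
  (1 - t) * (m `^ al * (al * (b / m) + (1 - al))) = m `^ al.
  by rewrite /m; field; rewrite -/m gt_eqF.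
rewrite -[ltRHS]support; exact: ltr_leD.
Qed.

Lemma powR_le_concave (a b t : R) : 0 <= a -> 0 <= b -> 0 < t -> t < 1 ->
  t * a `^ al + (1 - t) * b `^ al <= (t * a + (1 - t) * b) `^ al.
Proof.
move=> a0 b0 t0 t1; have [->|ab] := eqVneq a b; first by rewrite -!mulrDl subrKC !mul1r.
exact/ltW/powR_lt_concave.
Qed.

End PowRConcave.

Lemma continuous_powR_max0 (R : realType) (al : R) : 0 < al ->
  continuous (fun x : R => (Num.max x 0) `^ al).
Proof.
move=> al0 a; have [a0|a_le0] := ltP 0 a.
  have powR_cont : {for a, continuous (fun x : R => x `^ al)}.
    apply/differentiable_continuous/(@derivable1_diffP R R^o).
    by apply: derivable_powR; rewrite in_itv /= andbT.
  move/cvgrPdist_lt: powR_cont => powR_cont; apply/cvgrPdist_lt => e e0.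
  near=> x.
  have x0 : 0 < x by near: x; exact: lt_nbhsr.
  rewrite /= !max_l ?ltW //; near: x; exact: powR_cont.
apply/cvgrPdist_lt => e e0; set d := e `^ al^-1.
have d0 : 0 < d by rewrite powR_gt0.
have dE : d `^ al = e by rewrite /d -powRrM mulVf ?gt_eqF // powRr1 // ltW.
near=> x; rewrite /= (max_r a_le0) powR0 ?gt_eqF // sub0r normrN.
have [x_le0|x0] := leP x 0; first by rewrite powR0 ?gt_eqF // normr0.
rewrite ger0_norm ?powR_ge0 // -dE gt0_ltr_powR ?nnegrE ?ltW //.
by near: x; apply: lt_nbhsl; exact: le_lt_trans a_le0 d0.
Unshelve. all: by end_near.
Qed.

Lemma prob_simplex_le1 (R : realType) n (p : 'rV[R]_n) i :
  prob_simplex p -> p ord0 i <= 1.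
Proof.
by move=> [p0 <-]; rewrite (bigD1 i) //= lerDl sumr_ge0.
Qed.

Definition sum_powR (R : realType) (al : R) n (p : 'rV[R]_n) :=
  \sum_(i < n) p ord0 i `^ al.

Lemma ZGE (R : realType) (lnG : R -> R) (al : R) n (p : 'rV[R]_n) :
  ZG lnG al p = lnG (sum_powR al p) / (1 - al).
Proof. by []. Qed.

Section SumPowR.
Variables (R : realType) (al : R).

Lemma sum_powR_ge1 n (p : 'rV[R]_n) : al <= 1 -> prob_simplex p -> 1 <= sum_powR al p.
Proof.
move=> al1 hp; have [p0 <-] := hp; apply: ler_sum => i _.
have [->|pi0] := eqVneq (p ord0 i) 0; first exact: powR_ge0.
by apply: ger1_powR; rewrite // lt_neqAle eq_sym pi0 p0 prob_simplex_le1.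
Qed.

Lemma sum_powR_row_mx0 n (p : 'rV[R]_n) : al != 0 ->
  sum_powR al (row_mx p (0 : 'rV[R]_1)) = sum_powR al p.
Proof.
move=> al0; rewrite /sum_powR big_split_ord /=; under eq_bigr do rewrite row_mxEl.
by rewrite [X in _ + X]big1 ?addr0 // => i _; rewrite row_mxEr mxE powR0.
Qed.

Hypotheses (al_gt0 : 0 < al) (al_lt1 : al < 1).

Lemma sum_powR_lt_concave n (p q : 'rV[R]_n) t :
  prob_simplex p -> prob_simplex q -> p != q -> 0 < t -> t < 1 ->
  t * sum_powR al p + (1 - t) * sum_powR al q < sum_powR al (t *: p + (1 - t) *: q).
Proof.
move=> [p0 _] [q0 _] pq t0 t1.
have [i pqi] : exists i, p ord0 i != q ord0 i.
  apply/existsP; apply: contraNT pq; rewrite negb_exists => /forallP pq.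
  by apply/eqP/rowP => j; apply/eqP/negbNE/pq.
rewrite /sum_powR !mulr_sumr -big_split /= [ltRHS](bigD1 i) //= [ltLHS](bigD1 i) //=.
apply: ltr_leD; first by rewrite !mxE powR_lt_concave.
by apply: ler_sum => j _; rewrite !mxE powR_le_concave.
Qed.

Lemma sum_powR_le_uniform n (p : 'rV[R]_n) : (0 < n)%N -> prob_simplex p ->
  sum_powR al p <= sum_powR al (const_mx n%:R^-1 : 'rV[R]_n).
Proof.
move=> n0 [p0 p1]; have u0 : 0 < n%:R^-1 :> R by rewrite invr_gt0 ltr0n.
rewrite /sum_powR; under [leRHS]eq_bigr do rewrite mxE.
rewrite sumr_const card_ord.
apply: le_trans (ler_sum _ (fun i _ => powR_le_tangent_at al_gt0 al_lt1 u0 (p0 i))) _.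
rewrite -mulr_sumr big_split /= -mulr_sumr -mulr_suml p1 sumr_const card_ord invrK.
have -> : al * (1 * n%:R) + (1 - al) *+ n = n%:R by rewrite -mulr_natl; ring.
by rewrite mulr_natr.
Qed.

End SumPowR.

Lemma strictly_increasing_pos_le (R : realType) (f : R -> R) :
  strictly_increasing_pos f -> forall x y, 0 < x -> x <= y -> f x <= f y.
Proof.
by move=> f_incr x y x0; rewrite le_eqVlt => /predU1P[->//|xy]; exact/ltW/f_incr.
Qed.

Lemma strictly_concave_pos_le (R : realType) (f : R -> R) :
  strictly_concave_pos f -> forall x y t, 0 < x -> 0 < y -> 0 < t -> t < 1 ->
  t * f x + (1 - t) * f y <= f (t * x + (1 - t) * y).
Proof.
move=> f_conc x y t x0 y0 t0 t1; have [->|xy] := eqVneq x y.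
  by rewrite -!mulrDl subrKC !mul1r.
exact/ltW/f_conc.
Qed.

Section ZG.
Variables (R : realType) (lnG : R -> R) (al : R).
Hypotheses (al_gt0 : 0 < al) (al_lt1 : al < 1).

Lemma ZG_continuous n : {within [set x : R | 0 < x], continuous lnG} ->
  {within @prob_simplex R n, continuous (@ZG R lnG al n)}.
Proof.
move=> lnG_cont.
have lnG_cont_at y : 0 < y -> {for y, continuous lnG}.
  move=> y0; move: lnG_cont; rewrite continuous_open_subspace; last exact: open_gt.
  by apply; rewrite inE.
pose S (p : 'rV[R]_n) := \sum_(i < n) (Num.max (p ord0 i) 0) `^ al.
have S_cont : continuous S.
  apply: continuous_big; first exact: add_continuous.
  move=> i _ p; apply: (@continuous_comp _ _ _ (fun M : 'rV[R]_n => M ord0 i)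
    (fun x : R => (Num.max x 0) `^ al)).
    exact: coord_continuous.
  exact: continuous_powR_max0.
(* On the simplex all p_i >= 0 and S p >= 1, so this extension agrees with ZG. *)
apply: (@subspace_eq_continuous _ _ _ (fun p => lnG (Num.max (S p) 1) / (1 - al))).
  move=> p; rewrite inE => hp; have [p0 _] := hp.
  have -> : S p = sum_powR al p by apply: eq_bigr => i _; rewrite max_l.
  by rewrite /from_subspace ZGE max_l // (sum_powR_ge1 (ltW al_lt1) hp).
apply: continuous_subspaceT => p; apply: (@cvgMr_tmp _ _ (nbhs p) (nbhs_filter p)).
apply: (@continuous_comp _ _ _ (fun p => Num.max (S p) 1) lnG).
  by apply: (continuous_max (S_cont p)); exact: cst_continuous.
by apply: lnG_cont_at; rewrite lt_max ltr01 orbT.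
Qed.

Lemma ZG_le_uniform n (p : 'rV[R]_n) : strictly_increasing_pos lnG -> (0 < n)%N ->
  prob_simplex p -> ZG lnG al p <= ZG lnG al (const_mx n%:R^-1 : 'rV[R]_n).
Proof.
move=> lnG_incr n0 hp; rewrite !ZGE ler_pM2r ?invr_gt0 ?subr_gt0 //.
apply: strictly_increasing_pos_le; first exact: lnG_incr.
  exact: lt_le_trans ltr01 (sum_powR_ge1 (ltW al_lt1) hp).
exact: sum_powR_le_uniform.
Qed.

Lemma ZG_strictly_concave n : strictly_increasing_pos lnG -> strictly_concave_pos lnG ->
  strictly_concave_on (@prob_simplex R n) (@ZG R lnG al n).
Proof.
move=> lnG_incr lnG_conc p q t hp hq pq t0 t1.
rewrite !ZGE !mulrA -mulrDl ltr_pM2r ?invr_gt0 ?subr_gt0 //.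
have Sp0 := lt_le_trans ltr01 (sum_powR_ge1 (ltW al_lt1) hp).
have Sq0 := lt_le_trans ltr01 (sum_powR_ge1 (ltW al_lt1) hq).
apply: le_lt_trans (strictly_concave_pos_le lnG_conc Sp0 Sq0 t0 t1) _.
apply: lnG_incr; last exact: sum_powR_lt_concave.
by rewrite addr_gt0 ?mulr_gt0 ?subr_gt0.
Qed.

Lemma ZG_row_mx0 n (p : 'rV[R]_n) : ZG lnG al (row_mx p (0 : 'rV[R]_1)) = ZG lnG al p.
Proof. by rewrite !ZGE sum_powR_row_mx0 ?gt_eqF. Qed.

End ZG.

Theorem mainTheorem6 (R : realType) (lnG : R -> R) (alpha : R) (W : nat)
  (lnG_cont : {within [set x : R | 0 < x], continuous lnG})
  (lnG_incr : strictly_increasing_pos lnG)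
  (lnG_conc : strictly_concave_pos lnG)
  (lnG1 : lnG 1 = 0)
  (alpha_gt0 : 0 < alpha) (alpha_lt1 : alpha < 1)
  (W_gt0 : (0 < W)%N) :
  (* (SK1) continuity on the simplex *)
  {within @prob_simplex R W, continuous (@ZG R lnG alpha W)} /\
  (* (SK2) maximum at the uniform distribution, and strict concavity *)
  (forall p, @prob_simplex R W p ->
     ZG lnG alpha p <= ZG lnG alpha (const_mx (W%:R^-1) : 'rV[R]_W)) /\
  @strictly_concave_on R W (@prob_simplex R W) (@ZG R lnG alpha W) /\
  (* (SK3) expansibility: appending a zero-probability event *)
  (forall p, @prob_simplex R W p ->
     ZG lnG alpha (row_mx p (0 : 'rV[R]_1)) = ZG lnG alpha p).
Proof.
(* [lnG1] only normalises ZG to vanish at point masses; (SK1)-(SK3) do not need it. *)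
split; first exact: ZG_continuous.
split; first by move=> p; exact: ZG_le_uniform.
split; first exact: ZG_strictly_concave.
by move=> p _; exact: ZG_row_mx0.
Qed.
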